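(* Let $b,c\in\mathbb{R}$ with $b,c>0$ and $b\neq c$, and let $a=(a_0,a_1,a_2,a_3)=(0,b,c,0)$. Then every tropical recurrent minimal sequence satisfying $a$ is periodic if and only if either $b<c\le 2b$ or $c<b\le 2c$. In this case every tropical recurrent minimal sequence satisfying $a$ is periodic with period $3$.
   Context: Here $n=3$. A tropical recurrent sequence is a sequence $y=(y_j)_{j\in\mathbb{Z}}$ with $y_j\in\mathbb{R}\cup\{\infty\}$, not all equal to $\infty$. It satisfies $a$ if for every $k\in\mathbb{Z}$ the minimum $\min_{0\le i\le 3}\{a_i+y_{i+k}\}$ is attained for at least two different indices $i$. It is minimal if for every $j\in\mathbb{Z}$ there exists $k$ with $j-3\le k\le j$ such that $a_{j-k}+y_j=\min_{0\le i\le 3}\{a_i+y_{i+k}\}$. The sequence is periodic with period $d\ge1$ if $y_{j+d}=y_j$ for all $j$, and periodic if it has some period $d\ge 1$. *)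

From Stdlib Require Import Reals ZArith Lia Lra.
Open Scope R_scope.

(* Elements of R ∪ {∞}: Some x = x, None = ∞. *)
Definition Rinf := option R.

Definition le_inf (u v : Rinf) : Prop :=
  match u, v with
  | _, None => True
  | None, Some _ => False
  | Some x, Some y => x <= y
  end.

Definition add_inf (a : R) (u : Rinf) : Rinf :=
  match u with
  | Some x => Some (a + x)
  | None => None
  end.

Definition ord : nat := 3%nat.

Definition trop_seq (y : Z -> Rinf) : Prop := exists j : Z, y j <> None.

Definition term (a : nat -> R) (y : Z -> Rinf) (k : Z) (i : nat) : Rinf :=
  add_inf (a i) (y (Z.of_nat i + k)%Z).

Definition attains_min (a : nat -> R) (y : Z -> Rinf) (k : Z) (i : nat) : Prop :=
  (i <= ord)%nat /\
  forall i' : nat, (i' <= ord)%nat -> le_inf (term a y k i) (term a y k i').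

Definition satisfies (a : nat -> R) (y : Z -> Rinf) : Prop :=
  forall k : Z, exists i1 i2 : nat,
    i1 <> i2 /\ attains_min a y k i1 /\ attains_min a y k i2.

(* Minimality: for every j there is k with j-n <= k <= j such that
   a_{j-k} + y_j = min_{0<=i<=n} (a_i + y_{i+k}); note a_{j-k} + y_j is
   the term with index i = j-k at shift k. *)
Definition minimal (a : nat -> R) (y : Z -> Rinf) : Prop :=
  forall j : Z, exists k : Z,
    (j - Z.of_nat ord <= k <= j)%Z /\ attains_min a y k (Z.to_nat (j - k)).

Definition periodic_with (d : nat) (y : Z -> Rinf) : Prop :=
  (1 <= d)%nat /\ forall j : Z, y (j + Z.of_nat d)%Z = y j.

Definition periodic (y : Z -> Rinf) : Prop := exists d : nat, periodic_with d y.

Definition coef (b c : R) (i : nat) : R :=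
  match i with
  | 1%nat => b
  | 2%nat => c
  | _ => 0
  end.

(** An infinite entry is, by minimality, a minimal term of some window, so that whole window
    is infinite; the minimum of a neighbouring window is attained twice, hence on a term of
    the infinite window, so infinite windows spread to everything.  Thus all entries are
    finite, and both conditions become linear inequalities between consecutive entries.
    When [b < c <= 2b] or [c < b <= 2c], the inequalities on seven consecutive entries
    exclude [y_k < y_(k+3)]; the symmetry [y_j |-> y_(-j)], [(b, c) |-> (c, b)] excludes
    [y_k > y_(k+3)].  When [c > 2b], the 3-periodic pattern [(2b, b, 0)] raised by [c - 2b]
    at positions 0, 1 and 3 is a non-periodic solution, and [b > 2c] is symmetric. *)

From Stdlib Require Import Reals ZArith Lia Lra FunctionalExtensionality.
Open Scope R_scope.

(* Makes e.g. [g (k + 1 + 1)] and [g (k + 2)] the same atom for [lra]. *)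
Ltac normalize_args g :=
  repeat match goal with
  | H : context [g ?e] |- _ => progress ring_simplify e in H
  | |- context [g ?e] => progress ring_simplify e
  end.

Lemma le_inf_None_l (u : Rinf) : le_inf None u -> u = None.
Proof. destruct u; simpl; tauto. Qed.

Lemma add_inf_None (x : R) (u : Rinf) : add_inf x u = None -> u = None.
Proof. destruct u; simpl; congruence. Qed.

Section InfiniteWindows.

Variables (a : nat -> R) (y : Z -> Rinf).

Definition inf_window (k : Z) : Prop :=
  forall i : nat, (i <= ord)%nat -> y (Z.of_nat i + k) = None.

Lemma attains_min_None k i : attains_min a y k i -> term a y k i = None -> inf_window k.
Proof.
  intros [_ Hle] Hi i' Hi'.
  apply (add_inf_None (a i')), le_inf_None_l.
  rewrite <- Hi. exact (Hle i' Hi').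
Qed.

Hypothesis y_sat : satisfies a y.

Lemma inf_window_pred k : inf_window k -> inf_window (k - 1).
Proof.
  intros Hk. destruct (y_sat (k - 1)%Z) as (i1 & i2 & Hne & H1 & H2).
  assert (Hpos : exists i, (1 <= i)%nat /\ attains_min a y (k - 1) i).
  { destruct i1 as [|i1]; [exists i2; split; [lia | exact H2] | exists (S i1); split; [lia | exact H1]]. }
  destruct Hpos as (i & Hi & Hmin).
  apply (attains_min_None _ i Hmin). unfold term.
  replace (Z.of_nat i + (k - 1))%Z with (Z.of_nat (i - 1) + k)%Z by lia.
  destruct Hmin as [Hi3 _]. rewrite Hk; [reflexivity | lia].
Qed.

Lemma inf_window_succ k : inf_window k -> inf_window (k + 1).
Proof.
  intros Hk. destruct (y_sat (k + 1)%Z) as (i1 & i2 & Hne & H1 & H2).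
  assert (Hlow : exists i, (i < ord)%nat /\ attains_min a y (k + 1) i).
  { pose proof (proj1 H1). pose proof (proj1 H2). unfold ord in *.
    destruct (Nat.eq_dec i1 3); [exists i2 | exists i1]; split; (assumption || lia). }
  destruct Hlow as (i & Hi & Hmin).
  apply (attains_min_None _ i Hmin). unfold term.
  replace (Z.of_nat i + (k + 1))%Z with (Z.of_nat (i + 1) + k)%Z by lia.
  rewrite Hk; [reflexivity | unfold ord in *; lia].
Qed.

Lemma inf_window_everywhere k k' : inf_window k -> inf_window k'.
Proof.
  intros Hk. replace k' with (k + (k' - k))%Z by ring.
  induction (k' - k)%Z as [|d IH|d IH] using Z.peano_ind.
  - rewrite Z.add_0_r. exact Hk.
  - rewrite Z.add_succ_r, <- Z.add_1_r. exact (inf_window_succ _ IH).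
  - rewrite Z.add_pred_r, <- Z.sub_1_r. exact (inf_window_pred _ IH).
Qed.

Lemma finite_entries : trop_seq y -> minimal a y -> forall j, y j <> None.
Proof.
  intros [j0 Hj0] Hmin j Hj. destruct (Hmin j) as (k & Hk & Hkmin).
  assert (Hinf : inf_window k).
  { apply (attains_min_None _ _ Hkmin). unfold term.
    rewrite Z2Nat.id by lia. replace (j - k + k)%Z with j by ring. rewrite Hj. reflexivity. }
  apply Hj0, (inf_window_everywhere k j0 Hinf 0%nat). unfold ord; lia.
Qed.

End InfiniteWindows.

Lemma finite_seq_real (y : Z -> Rinf) :
  (forall j, y j <> None) -> exists g : Z -> R, y = fun j => Some (g j).
Proof.
  intros Hfin. exists (fun j => match y j with Some r => r | None => 0 end).
  apply functional_extensionality. intros j.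
  specialize (Hfin j). destruct (y j); [reflexivity | contradiction].
Qed.

Definition rev_seq (y : Z -> Rinf) : Z -> Rinf := fun j => y (- j)%Z.

Section Reversal.

Variables (a a' : nat -> R) (y : Z -> Rinf).
Hypothesis a'_rev : forall i, a' i = a (ord - i)%nat.

Lemma term_rev k i :
  (i <= ord)%nat -> term a' (rev_seq y) k i = term a y (- (k + 3)) (ord - i).
Proof.
  intros Hi. unfold term, rev_seq. rewrite a'_rev. do 2 f_equal. unfold ord in *. lia.
Qed.

Lemma attains_min_rev k i :
  (i <= ord)%nat -> attains_min a y (- (k + 3)) (ord - i) -> attains_min a' (rev_seq y) k i.
Proof.
  intros Hi [_ Hle]. split; [exact Hi |]. intros i' Hi'.
  rewrite !term_rev by assumption. apply Hle. unfold ord; lia.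
Qed.

Lemma satisfies_rev : satisfies a y -> satisfies a' (rev_seq y).
Proof.
  intros Hsat k. destruct (Hsat (- (k + 3))%Z) as (i1 & i2 & Hne & H1 & H2).
  pose proof (proj1 H1). pose proof (proj1 H2).
  exists (ord - i1)%nat, (ord - i2)%nat. unfold ord in *.
  split; [lia |]. split; apply attains_min_rev; try (unfold ord; lia).
  - replace (ord - (3 - i1))%nat with i1 by (unfold ord; lia). exact H1.
  - replace (ord - (3 - i2))%nat with i2 by (unfold ord; lia). exact H2.
Qed.

Lemma minimal_rev : minimal a y -> minimal a' (rev_seq y).
Proof.
  intros Hmin j. destruct (Hmin (- j)%Z) as (k & Hk & Hkmin).
  exists (- (k + 3))%Z. unfold ord in *. split; [lia |].
  apply attains_min_rev; [unfold ord; lia |].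
  replace (- (- (k + 3) + 3))%Z with k by ring.
  replace (ord - Z.to_nat (j - - (k + 3)))%nat with (Z.to_nat (- j - k)) by (unfold ord; lia).
  exact Hkmin.
Qed.

End Reversal.

Lemma trop_seq_rev (y : Z -> Rinf) : trop_seq y -> trop_seq (rev_seq y).
Proof. intros [j Hj]. exists (- j)%Z. unfold rev_seq. now rewrite Z.opp_involutive. Qed.

Lemma periodic_rev (y : Z -> Rinf) : periodic (rev_seq y) -> periodic y.
Proof.
  intros (d & Hd & Hper). exists d. split; [exact Hd |]. intros j.
  specialize (Hper (- (j + Z.of_nat d))%Z). unfold rev_seq in Hper.
  normalize_args y. symmetry. exact Hper.
Qed.

Lemma coef_swap b c i : coef c b i = coef b c (ord - i)%nat.
Proof. destruct i as [|[|[|[|i]]]]; reflexivity. Qed.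

Definition is_minimizer (f : nat -> R) (i : nat) : Prop :=
  (i <= ord)%nat /\ forall i', (i' <= ord)%nat -> f i <= f i'.

Definition min_attained_twice (t0 t1 t2 t3 : R) : Prop :=
  (t0 = t1 /\ t0 <= t2 /\ t0 <= t3) \/ (t0 = t2 /\ t0 <= t1 /\ t0 <= t3) \/
  (t0 = t3 /\ t0 <= t1 /\ t0 <= t2) \/ (t1 = t2 /\ t1 <= t0 /\ t1 <= t3) \/
  (t1 = t3 /\ t1 <= t0 /\ t1 <= t2) \/ (t2 = t3 /\ t2 <= t0 /\ t2 <= t1).

(* Disjunct [i] says that [x], as term [i] of the window starting [i] places before it,
   is a minimal term of that window. *)
Definition minimal_at (b c xm3 xm2 xm1 x x1 x2 x3 : R) : Prop :=
  (x <= b + x1 /\ x <= c + x2 /\ x <= x3) \/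
  (b + x <= xm1 /\ b + x <= c + x1 /\ b + x <= x2) \/
  (c + x <= xm2 /\ c + x <= b + xm1 /\ c + x <= x1) \/
  (x <= xm3 /\ x <= b + xm2 /\ x <= c + xm1).

Lemma is_minimizer_iff f i :
  (i <= ord)%nat ->
  is_minimizer f i <-> f i <= f 0%nat /\ f i <= f 1%nat /\ f i <= f 2%nat /\ f i <= f 3%nat.
Proof.
  unfold is_minimizer, ord. intros Hi. split.
  - intros [_ Hle]. repeat split; apply Hle; lia.
  - intros (H0 & H1 & H2 & H3). split; [exact Hi |].
    intros [|[|[|[|i']]]] Hi'; auto; lia.
Qed.

Lemma two_minimizers_iff (f : nat -> R) :
  (exists i1 i2, i1 <> i2 /\ is_minimizer f i1 /\ is_minimizer f i2) <->
  min_attained_twice (f 0%nat) (f 1%nat) (f 2%nat) (f 3%nat).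
Proof.
  unfold min_attained_twice. split.
  - intros (i1 & i2 & Hne & H1 & H2).
    pose proof (proj1 H1) as Hi1. pose proof (proj1 H2) as Hi2.
    rewrite is_minimizer_iff in H1, H2 by assumption. unfold ord in Hi1, Hi2.
    destruct i1 as [|[|[|[|i1]]]], i2 as [|[|[|[|i2]]]]; lra || lia.
  - intros [H|[H|[H|[H|[H|H]]]]];
      [exists 0%nat, 1%nat | exists 0%nat, 2%nat | exists 0%nat, 3%nat
      | exists 1%nat, 2%nat | exists 1%nat, 3%nat | exists 2%nat, 3%nat];
      rewrite !is_minimizer_iff by (unfold ord; lia); repeat split; lra || lia.
Qed.

Lemma attains_min_real a g k i :
  attains_min a (fun j => Some (g j)) k i <->
  is_minimizer (fun i => a i + g (Z.of_nat i + k)%Z) i.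
Proof. reflexivity. Qed.

Lemma minimal_iff_shift a y :
  minimal a y <->
  forall j, attains_min a y j 0 \/ attains_min a y (j - 1) 1 \/
            attains_min a y (j - 2) 2 \/ attains_min a y (j - 3) 3.
Proof.
  unfold minimal, ord. split.
  - intros Hmin j. destruct (Hmin j) as (k & Hk & Hkmin).
    assert (k = j \/ k = j - 1 \/ k = j - 2 \/ k = j - 3)%Z as [->|[->|[->| ->]]] by lia;
      [ replace (Z.to_nat (j - j)) with 0%nat in Hkmin by lia
      | replace (Z.to_nat (j - (j - 1))) with 1%nat in Hkmin by lia
      | replace (Z.to_nat (j - (j - 2))) with 2%nat in Hkmin by lia
      | replace (Z.to_nat (j - (j - 3))) with 3%nat in Hkmin by lia ]; tauto.
  - intros Hmin j. destruct (Hmin j) as [H|[H|[H|H]]];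
      [exists j | exists (j - 1)%Z | exists (j - 2)%Z | exists (j - 3)%Z];
      (split; [lia |]);
      [ replace (Z.to_nat (j - j)) with 0%nat by lia
      | replace (Z.to_nat (j - (j - 1))) with 1%nat by lia
      | replace (Z.to_nat (j - (j - 2))) with 2%nat by lia
      | replace (Z.to_nat (j - (j - 3))) with 3%nat by lia ]; exact H.
Qed.

Lemma satisfies_coef_iff b c (g : Z -> R) :
  satisfies (coef b c) (fun j => Some (g j)) <->
  forall k, min_attained_twice (g k) (b + g (k + 1)%Z) (c + g (k + 2)%Z) (g (k + 3)%Z).
Proof.
  split; intros H k; specialize (H k).
  - apply (two_minimizers_iff (fun i => coef b c i + g (Z.of_nat i + k)%Z)) in H.
    cbv beta in H. simpl coef in H. simpl Z.of_nat in H. normalize_args g. rewrite !Rplus_0_l in H. exact H.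
  - apply (two_minimizers_iff (fun i => coef b c i + g (Z.of_nat i + k)%Z)).
    cbv beta. simpl coef. simpl Z.of_nat. normalize_args g. rewrite !Rplus_0_l. exact H.
Qed.

Lemma minimal_coef_iff b c (g : Z -> R) :
  minimal (coef b c) (fun j => Some (g j)) <->
  forall j, minimal_at b c (g (j - 3)%Z) (g (j - 2)%Z) (g (j - 1)%Z) (g j)
                       (g (j + 1)%Z) (g (j + 2)%Z) (g (j + 3)%Z).
Proof.
  rewrite minimal_iff_shift. unfold minimal_at.
  split; intros H j; specialize (H j);
    rewrite !attains_min_real, !is_minimizer_iff in * by (unfold ord; lia);
    cbv beta in *; simpl coef in *; simpl Z.of_nat in *; normalize_args g; lra.
Qed.

Definition balanced (b c : R) : Prop := (b < c /\ c <= 2 * b) \/ (c < b /\ b <= 2 * c).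

Lemma balanced_sym b c : balanced b c -> balanced c b.
Proof. unfold balanced. tauto. Qed.

Lemma no_rise_over_three b c x0 x1 x2 x3 x4 x5 x6 :
  balanced b c ->
  min_attained_twice x0 (b + x1) (c + x2) x3 ->
  min_attained_twice x1 (b + x2) (c + x3) x4 ->
  min_attained_twice x2 (b + x3) (c + x4) x5 ->
  minimal_at b c x0 x1 x2 x3 x4 x5 x6 ->
  x3 <= x0.
Proof. unfold balanced, min_attained_twice, minimal_at. intros. lra. Qed.

Lemma real_seq_no_rise b c (g : Z -> R) :
  balanced b c ->
  satisfies (coef b c) (fun j => Some (g j)) -> minimal (coef b c) (fun j => Some (g j)) ->
  forall k, g (k + 3)%Z <= g k.
Proof.
  rewrite satisfies_coef_iff, minimal_coef_iff. intros Hbc Hsat Hmin k.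
  pose proof (Hsat k) as W0. pose proof (Hsat (k + 1)%Z) as W1.
  pose proof (Hsat (k + 2)%Z) as W2. pose proof (Hmin (k + 3)%Z) as M3.
  normalize_args g.
  exact (no_rise_over_three b c _ _ _ _ _ _ _ Hbc W0 W1 W2 M3).
Qed.

Lemma real_seq_period_three b c (g : Z -> R) :
  balanced b c ->
  satisfies (coef b c) (fun j => Some (g j)) -> minimal (coef b c) (fun j => Some (g j)) ->
  forall k, g (k + 3)%Z = g k.
Proof.
  intros Hbc Hsat Hmin k. apply Rle_antisym.
  - exact (real_seq_no_rise b c g Hbc Hsat Hmin k).
  - pose proof (real_seq_no_rise c b (fun j => g (- j)%Z) (balanced_sym b c Hbc)
      (satisfies_rev _ _ _ (coef_swap b c) Hsat) (minimal_rev _ _ _ (coef_swap b c) Hmin)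
      (- (k + 3))%Z) as Hrev.
    cbv beta in Hrev. normalize_args g. exact Hrev.
Qed.

Lemma period_three b c :
  balanced b c -> forall y : Z -> Rinf,
  trop_seq y -> satisfies (coef b c) y -> minimal (coef b c) y -> periodic_with 3 y.
Proof.
  intros Hbc y Htrop Hsat Hmin.
  destruct (finite_seq_real y (finite_entries _ _ Hsat Htrop Hmin)) as [g ->].
  split; [lia |]. intros j. f_equal.
  exact (real_seq_period_three b c g Hbc Hsat Hmin j).
Qed.

Definition base3 (b : R) (j : Z) : R :=
  match (j mod 3)%Z with 0%Z => 2 * b | 1%Z => b | _ => 0 end.

Definition counter_seq (b c : R) (j : Z) : R :=
  match j with 0%Z | 3%Z => c | 1%Z => c - b | _ => base3 b j end.

Lemma counter_seq_generic b c j :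
  j <> 0%Z -> j <> 1%Z -> j <> 3%Z -> counter_seq b c j = base3 b j.
Proof.
  intros H0 H1 H3. destruct j as [|p|p]; try reflexivity; [congruence |].
  destruct p as [[]|[]|]; reflexivity || congruence.
Qed.

Ltac reduce_mod3 :=
  repeat match goal with
  | |- context [(?e mod 3)%Z] =>
      first [ replace (e mod 3)%Z with 0%Z by (Z.div_mod_to_equations; lia)
            | replace (e mod 3)%Z with 1%Z by (Z.div_mod_to_equations; lia)
            | replace (e mod 3)%Z with 2%Z by (Z.div_mod_to_equations; lia) ]
  end; simpl.

Lemma base3_window b c k :
  0 <= b -> 2 * b <= c ->
  min_attained_twice (base3 b k) (b + base3 b (k + 1)) (c + base3 b (k + 2)) (base3 b (k + 3)).
Proof.
  intros Hb Hc. unfold base3, min_attained_twice.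
  assert (k mod 3 = 0 \/ k mod 3 = 1 \/ k mod 3 = 2)%Z as [E|[E|E]]
    by (Z.div_mod_to_equations; lia); reduce_mod3; lra.
Qed.

Lemma base3_minimal_at b c j :
  0 <= b -> 2 * b <= c ->
  minimal_at b c (base3 b (j - 3)) (base3 b (j - 2)) (base3 b (j - 1)) (base3 b j)
                 (base3 b (j + 1)) (base3 b (j + 2)) (base3 b (j + 3)).
Proof.
  intros Hb Hc. unfold base3, minimal_at.
  assert (j mod 3 = 0 \/ j mod 3 = 1 \/ j mod 3 = 2)%Z as [E|[E|E]]
    by (Z.div_mod_to_equations; lia); reduce_mod3; lra.
Qed.

Lemma counter_seq_window b c k :
  0 < b -> 2 * b < c ->
  min_attained_twice (counter_seq b c k) (b + counter_seq b c (k + 1))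
                     (c + counter_seq b c (k + 2)) (counter_seq b c (k + 3)).
Proof.
  intros Hb Hc.
  assert (Hfar : (k <= -4 \/ 4 <= k)%Z \/ (-3 <= k <= 3)%Z) by lia.
  destruct Hfar as [Hfar | Hnear].
  - rewrite !counter_seq_generic by lia. apply base3_window; lra.
  - assert (k = -3 \/ k = -2 \/ k = -1 \/ k = 0 \/ k = 1 \/ k = 2 \/ k = 3)%Z
      as [->|[->|[->|[->|[->|[->| ->]]]]]] by lia;
      unfold counter_seq, base3, min_attained_twice; simpl; lra.
Qed.

Lemma counter_seq_minimal_at b c j :
  0 < b -> 2 * b < c ->
  minimal_at b c (counter_seq b c (j - 3)) (counter_seq b c (j - 2))
                 (counter_seq b c (j - 1)) (counter_seq b c j) (counter_seq b c (j + 1))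
                 (counter_seq b c (j + 2)) (counter_seq b c (j + 3)).
Proof.
  intros Hb Hc.
  assert (Hfar : (j <= -4 \/ 7 <= j)%Z \/ (-3 <= j <= 6)%Z) by lia.
  destruct Hfar as [Hfar | Hnear].
  - rewrite !counter_seq_generic by lia. apply base3_minimal_at; lra.
  - assert (j = -3 \/ j = -2 \/ j = -1 \/ j = 0 \/ j = 1 \/ j = 2 \/ j = 3 \/ j = 4 \/ j = 5
            \/ j = 6)%Z as [->|[->|[->|[->|[->|[->|[->|[->|[->| ->]]]]]]]]] by lia;
      unfold counter_seq, base3, minimal_at; simpl; lra.
Qed.

Lemma counter_seq_not_periodic b c :
  c <> 2 * b -> ~ periodic (fun j => Some (counter_seq b c j)).
Proof.
  intros Hc (d & Hd & Hper).
  assert (Hstep : forall j, counter_seq b c (j + Z.of_nat d) = counter_seq b c j)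
    by (intros j; injection (Hper j); auto).
  pose proof (Hstep (-3 * Z.of_nat d)%Z) as E1. pose proof (Hstep (-2 * Z.of_nat d)%Z) as E2.
  pose proof (Hstep (- Z.of_nat d)%Z) as E3.
  normalize_args (counter_seq b c).
  assert (Hfar : counter_seq b c (-3 * Z.of_nat d) = 2 * b).
  { rewrite counter_seq_generic by lia. unfold base3. reduce_mod3. reflexivity. }
  apply Hc. change c with (counter_seq b c 0). congruence.
Qed.

Lemma counterexample_lt b c :
  0 < b -> 2 * b < c ->
  exists y, trop_seq y /\ satisfies (coef b c) y /\ minimal (coef b c) y /\ ~ periodic y.
Proof.
  intros Hb Hc. exists (fun j => Some (counter_seq b c j)).
  rewrite satisfies_coef_iff, minimal_coef_iff. split; [exists 0%Z; discriminate |].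
  split; [| split]; intros.
  - apply counter_seq_window; assumption.
  - apply counter_seq_minimal_at; assumption.
  - apply counter_seq_not_periodic. lra.
Qed.

Lemma counterexample b c :
  0 < b -> 0 < c -> 2 * b < c \/ 2 * c < b ->
  exists y, trop_seq y /\ satisfies (coef b c) y /\ minimal (coef b c) y /\ ~ periodic y.
Proof.
  intros Hb Hc [Hlt | Hgt]; [exact (counterexample_lt b c Hb Hlt) |].
  destruct (counterexample_lt c b Hc Hgt) as (y & Htrop & Hsat & Hmin & Hnp).
  exists (rev_seq y). split; [| split; [| split]].
  - exact (trop_seq_rev y Htrop).
  - exact (satisfies_rev _ _ _ (coef_swap c b) Hsat).
  - exact (minimal_rev _ _ _ (coef_swap c b) Hmin).
  - intros Hper. exact (Hnp (periodic_rev y Hper)).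
Qed.

Lemma balanced_or_unbalanced b c :
  b <> c -> balanced b c \/ 2 * b < c \/ 2 * c < b.
Proof.
  unfold balanced. intros Hbc.
  destruct (Rtotal_order b c) as [H | [H | H]]; [lra | contradiction | lra].
Qed.

Theorem proposition2 (b c : R) (hb : 0 < b) (hc : 0 < c) (hbc : b <> c) :
  ((forall y : Z -> Rinf,
      trop_seq y -> satisfies (coef b c) y -> minimal (coef b c) y -> periodic y)
   <-> ((b < c /\ c <= 2 * b) \/ (c < b /\ b <= 2 * c)))
  /\
  (((b < c /\ c <= 2 * b) \/ (c < b /\ b <= 2 * c)) ->
   forall y : Z -> Rinf,
     trop_seq y -> satisfies (coef b c) y -> minimal (coef b c) y ->
     periodic_with 3 y).
Proof.
  split; [split |].
  - intros Hall.
    destruct (balanced_or_unbalanced b c hbc) as [Hbal | Hunb]; [exact Hbal |].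
    destruct (counterexample b c hb hc Hunb) as (y & Htrop & Hsat & Hmin & Hnp).
    contradiction (Hnp (Hall y Htrop Hsat Hmin)).
  - intros Hbal y Htrop Hsat Hmin. exists 3%nat.
    exact (period_three b c Hbal y Htrop Hsat Hmin).
  - exact (period_three b c).
Qed.
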